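(* Let $G$ be a finite commutative transitive group with trivial center, and let $G_1,\dots,G_n$ be its maximal abelian subgroups, which cover $G$, with $n\geq3$. Set $$\rho(n)=1+(n-1)\prod_{i=1}^n|G_i|-\sum_{i=1}^n\prod_{j\neq i}|G_j|,\qquad \mathcal N_G=1+(n-1)|G|-\sum_{i=1}^n\frac{|G|}{|G_i|}.$$ Then $\rho(n)>\mathcal N_G$.
   Context: A group $G$ is commutative transitive (CT) if commutation is transitive on non-central elements: for all non-central $a,b,c\in G$, $[a,b]=[b,c]=1$ implies $[a,c]=1$. $\rho(n)$ is the rank of the free kernel of $G_1*\cdots*G_n\to G_1\times\cdots\times G_n$, and $\mathcal N_G$ is the rank of the free group $\pi_1(E(2,G))$ (with $E(2,G)$ the homotopy fibre of $B(2,G)\to BG$, where $B(2,G)$ is the geometric realization of the simplicial subspace of the bar construction of $G$ whose $k$-simplices are the pairwise commuting $k$-tuples $\mathrm{Hom}(\mathbb Z^k,G)\subseteq G^k$). *)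

From HB Require Import structures.
From mathcomp Require Import all_boot all_order all_algebra all_fingroup all_solvable.
Set Implicit Arguments. Unset Strict Implicit. Unset Printing Implicit Defensive.

Local Open Scope group_scope.

Definition comm_transitive (gT : finGroupType) (G : {set gT}) : Prop :=
  forall a b c : gT,
    a \in G :\: 'Z(G) -> b \in G :\: 'Z(G) -> c \in G :\: 'Z(G) ->
    commute a b -> commute b c -> commute a c.

Definition max_abelian_subgroups (gT : finGroupType) (G : {set gT})
  : {set {group gT}} :=
  [set A : {group gT} | [max A of B | (B \subset G) && abelian B]].

(* Every element of G lies in a maximal abelian subgroup, and once there are
   two of them none is trivial; counting non-identity elements then gives
   |G| <= 1 + sum_i (|G_i| - 1) < P := prod_i |G_i|.  Each cofactor gap
   P/|G_i| - |G|/|G_i| is at most (P - |G|)/2 because |G_i| >= 2, so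
   rho(n) - N_G >= (n - 1 - n/2)(P - |G|) > 0 for n >= 3. *)

From mathcomp Require Import all_boot all_order all_algebra all_fingroup all_solvable.
From mathcomp Require Import zify.
Import GRing.Theory Num.Theory.

Set Implicit Arguments.
Unset Strict Implicit.
Unset Printing Implicit Defensive.

Lemma add1_sum_subn1_leq_prod (I : Type) (r : seq I) (P : pred I) (f : I -> nat) :
  (forall i, P i -> 0 < f i)%N ->
  (1 + \sum_(i <- r | P i) (f i - 1) <= \prod_(i <- r | P i) f i)%N.
Proof.
move=> f_gt0; elim/big_rec2: _ => [//|i s p Pi IH].
have := f_gt0 i Pi; nia.
Qed.

Lemma card_leq_cover (gT : finGroupType) (G : {set gT}) (M : {set {group gT}}) :
  G \subset \bigcup_(A in M) A ->
  (#|G| <= 1 + \sum_(A in M) (#|A| - 1))%N.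
Proof.
move=> sGM.
have sG1M : G \subset 1%g :|: \bigcup_(A in M) (A :\ 1%g).
  apply/subsetP => x /(subsetP sGM) /bigcupP [A AM Ax].
  rewrite in_setU in_set1; case: eqP => //= /eqP x_neq1.
  by apply/bigcupP; exists A; rewrite // in_setD1 x_neq1.
apply: leq_trans (subset_leq_card sG1M) _.
apply: leq_trans (leq_card_setU _ _).1 _; rewrite cards1 leq_add2l.
elim/big_rec2: _ => [|A U s _ IH]; first by rewrite cards0.
apply: leq_trans (leq_card_setU _ _).1 _.
by rewrite (cardsD1 1%g A) group1 add1n subSS subn0 leq_add2l.
Qed.

Section MaxAbelianSubgroups.

Variables (gT : finGroupType) (G : {group gT}).
Local Notation M := (max_abelian_subgroups G).

Lemma max_abelian_subgroupsP (A : {group gT}) :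
  A \in M -> [/\ A \subset G, abelian A &
    forall B : {group gT}, B \subset G -> abelian B -> A \subset B -> B = A].
Proof.
rewrite inE => /maxgroupP [/andP [sAG abA] maxA]; split=> // B sBG abB sAB.
by apply: val_inj; apply: maxA; rewrite ?sBG.
Qed.

Lemma max_abelian_subgroups_cover : G \subset \bigcup_(A in M) A.
Proof.
apply/subsetP => x Gx.
have abelian_sub_x : ((<[x]> \subset G) && abelian <[x]>)%g.
  by rewrite cycle_subG Gx cycle_abelian.
have [A maxA sxA] := @maxgroup_exists gT
  (fun B : {group gT} => (B \subset G) && abelian B) <[x]>%G abelian_sub_x.
by apply/bigcupP; exists A; rewrite ?inE // (subsetP sxA) // cycle_id.
Qed.

Hypothesis M_gt1 : (1 < #|M|)%N.

Lemma other_max_abelian_subgroup (A : {group gT}) :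
  A \in M -> exists2 B : {group gT}, B \in M & B != A.
Proof.
move=> AM; have : (0 < #|M :\ A|)%N by move: M_gt1; rewrite (cardsD1 A M) AM.
by case/card_gt0P => B; rewrite in_setD1 => /andP [] ? ?; exists B.
Qed.

Lemma max_abelian_subgroup_card_ge2 (A : {group gT}) : A \in M -> (2 <= #|A|)%N.
Proof.
move=> AM; rewrite ltnNge; apply/negP => /card_le1_trivg A1.
have [B BM /eqP B_neq_A] := other_max_abelian_subgroup AM.
have [sBG abB _] := max_abelian_subgroupsP BM.
have [_ _ maxA] := max_abelian_subgroupsP AM.
by apply: B_neq_A; apply: maxA; rewrite // A1 sub1G.
Qed.

Lemma card_lt_prod_max_abelian_subgroups : (#|G| < \prod_(A in M) #|A|)%N.
Proof.
have [A AM] : exists A, A \in M by apply/card_gt0P; apply: ltnW.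
have [B BM B_neq_A] := other_max_abelian_subgroup AM.
have cardG := card_leq_cover max_abelian_subgroups_cover.
rewrite (bigD1 A AM) /= in cardG; rewrite (bigD1 A AM) /=.
set S := \sum_(C | _) _ in cardG; set Q := \prod_(C | _) _.
have S_lt_Q : (1 + S <= Q)%N := add1_sum_subn1_leq_prod _ (fun C _ => cardG_gt0 C).
have Q_ge2 : (2 <= Q)%N.
  rewrite /Q (bigD1 B) /=; last exact/andP.
  apply: leq_trans (max_abelian_subgroup_card_ge2 BM) _.
  by rewrite leq_pmulr // prodn_gt0.
have := max_abelian_subgroup_card_ge2 AM.
move: #|A| #|G| S Q cardG S_lt_Q Q_ge2 => a g S Q; nia.
Qed.

End MaxAbelianSubgroups.

Lemma sum_cofactor_gap_lt (I : finType) (M : {set I}) (a q r : I -> nat) (P g : nat) :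
  (forall i, i \in M -> [/\ 2 <= a i, P = a i * q i & g = a i * r i])%N ->
  (g < P)%N -> (2 < #|M|)%N ->
  (1 + (#|M|%:Z - 1) * g%:Z - \sum_(i in M) (r i)%:Z
     < 1 + (#|M|%:Z - 1) * P%:Z - \sum_(i in M) (q i)%:Z)%R.
Proof.
move=> Ma g_lt_P M_gt2.
have gap i : i \in M -> (2 * ((q i)%:Z - (r i)%:Z) <= P%:Z - g%:Z)%R.
  move=> /Ma [a_ge2 P_eq g_eq]; move: g_lt_P; rewrite P_eq g_eq; nia.
have sum_gap : (\sum_(i in M) 2 * ((q i)%:Z - (r i)%:Z)
    <= \sum_(i in M) (P%:Z - g%:Z))%R by exact: ler_sum.
rewrite sumr_const -mulr_sumr sumrB -[X in (_ <= X)%R]mulr_natr natz in sum_gap.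
move: sum_gap g_lt_P M_gt2; move: (\sum_(i in M) _)%R (\sum_(i in M) _)%R #|M|.
nia.
Qed.

Theorem lemma7p4 (gT : finGroupType) (G : {group gT}) :
  comm_transitive G ->
  ('Z(G) = 1)%g ->
  (3 <= #|max_abelian_subgroups G|)%N ->
  let M := max_abelian_subgroups G in
  let n := #|M| in
  let rho : int :=
    (1 + (n%:Z - 1) * (\prod_(A in M) #|A|)%:Z
       - \sum_(A in M) (\prod_(B in M | B != A) #|B|)%:Z)%R in
  let NG : int :=
    (1 + (n%:Z - 1) * #|G|%:Z - \sum_(A in M) (#|G| %/ #|A|)%:Z)%R in
  (NG < rho)%R.
Proof.
move=> _ _ M_ge3; cbv zeta.
set M := max_abelian_subgroups G in M_ge3 *.
have M_gt1 : (1 < #|M|)%N by apply: ltnW.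
have splitM A : A \in M -> [/\ 2 <= #|A|,
    \prod_(B in M) #|B| = #|A| * \prod_(B in M | B != A) #|B|
  & #|G| = #|A| * (#|G| %/ #|A|)]%N.
  move=> AM; split; first exact: (max_abelian_subgroup_card_ge2 M_gt1 AM).
    by rewrite (bigD1 A AM).
  have [sAG _ _] := max_abelian_subgroupsP AM.
  by rewrite mulnC divnK // cardSg.
exact: (sum_cofactor_gap_lt (q := fun A => \prod_(B in M | B != A) #|B|)
  (r := fun A => #|G| %/ #|A|) splitM (card_lt_prod_max_abelian_subgroups M_gt1) M_ge3).
Qed.
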